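(* Let $G=(g_1,\dots,g_k)\in\mathbb{N}_0^k$ be telescopic with $g_1>0$ and $c(G)=(c_2,\dots,c_k)$, and suppose $g_n=c_mg_m$ for some $m,n$ with $1<n<m\le k$. Then the sequence $$H=(g_1,\dots,g_{n-1},\,g_m,\,g_{n+1},\dots,g_{m-1},\,g_{m+1},\dots,g_k)\in\mathbb{N}_0^{k-1}$$ (obtained by swapping the $n$th and $m$th entries of $G$ and then deleting the $m$th entry) is telescopic and satisfies $\langle H\rangle=\langle G\rangle$.
   Context: $\langle\cdot\rangle$ denotes the set of $\mathbb{N}_0$-linear combinations. $G_i=(g_1,\dots,g_i)$, $d_i=\gcd(G_i)$, $c_j=d_{j-1}/d_j$; a sequence $G$ with $g_1>0$ is telescopic if $c_jg_j\in\langle G_{j-1}\rangle$ for all $2\le j\le k$. *)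

From mathcomp Require Import all_boot.
Set Implicit Arguments. Unset Strict Implicit. Unset Printing Implicit Defensive.

(* Sequences G = (g_1,...,g_k) are [seq nat]; g_i is [gi G i] (1-indexed). *)
Definition gi (G : seq nat) (i : nat) : nat := nth 0 G i.-1.

Definition Gpre (G : seq nat) (i : nat) : seq nat := take i G.

(* d_i = gcd(G_i)  (gcd of the empty sequence is 0) *)
Definition dgcd (G : seq nat) (i : nat) : nat := \big[gcdn/0]_(x <- Gpre G i) x.

Definition cc (G : seq nat) (j : nat) : nat := dgcd G j.-1 %/ dgcd G j.

Definition in_semigroup (S : seq nat) (x : nat) : Prop :=
  exists a : seq nat, size a = size S /\
    x = \sum_(i < size S) nth 0 a i * nth 0 S i.

Definition telescopic (G : seq nat) : Prop :=
  0 < gi G 1 /\ 0 < size G /\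
  forall j, 2 <= j <= size G -> in_semigroup (Gpre G j.-1) (cc G j * gi G j).

Definition swap_del (G : seq nat) (n m : nat) : seq nat :=
  take n.-1 G ++ gi G m :: take (m.-1 - n) (drop n G) ++ drop m G.

From mathcomp Require Import all_boot zify.

(** Write e = g_m, D = d_{m-1} and c = c_m = D / gcd(D, e), so that g_n = c e.
    As c is coprime to e / gcd(D, e), every multiple Q of D satisfies
    gcd(Q, c e) = c gcd(Q, e).  Hence moving e into position n divides by c
    both the gcd of each prefix that contains position n but not m and its gcd
    with the following entry, leaving those c_j unchanged; longer prefixes keep
    their gcd because e divides g_n.  For the same reason g_n = c e is redundant
    as a generator once e is present, so the semigroup is unchanged. *)

Lemma in_semigroup_nil x : in_semigroup [::] x <-> x = 0.
Proof.
split; first by case=> a [_ ->]; rewrite big_ord0.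
by move=> ->; exists [::]; rewrite big_ord0.
Qed.

Lemma in_semigroup_cons s S x :
  in_semigroup (s :: S) x <-> exists a y, in_semigroup S y /\ x = a * s + y.
Proof.
split.
- case=> a [size_a ->]; rewrite /= big_ord_recl /=.
  exists (nth 0 a 0), (\sum_(i < size S) nth 0 a (bump 0 i) * nth 0 S i).
  split=> //; exists (behead a); split; first by rewrite size_behead size_a.
  by apply: eq_bigr => i _; rewrite nth_behead.
- case=> b [y [[a [size_a ->]] ->]].
  by exists (b :: a); rewrite /= size_a big_ord_recl.
Qed.

Lemma in_semigroup0 S : in_semigroup S 0.
Proof.
elim: S => [|s S IH]; first exact/in_semigroup_nil.
by apply/in_semigroup_cons; exists 0, 0.
Qed.

Lemma in_semigroupD S x y :
  in_semigroup S x -> in_semigroup S y -> in_semigroup S (x + y).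
Proof.
elim: S x y => [|s S IH] x y.
  by move=> /in_semigroup_nil -> /in_semigroup_nil ->; apply/in_semigroup_nil.
move=> /in_semigroup_cons [a [x' [Sx' ->]]] /in_semigroup_cons [b [y' [Sy' ->]]].
apply/in_semigroup_cons; exists (a + b), (x' + y'); split; first exact: IH.
by rewrite mulnDl -!addnA (addnCA x').
Qed.

Lemma in_semigroupMl S k x : in_semigroup S x -> in_semigroup S (k * x).
Proof.
move=> Sx; elim: k => [|k IH]; first by rewrite mul0n; apply: in_semigroup0.
by rewrite mulSn; apply: in_semigroupD.
Qed.

Lemma mem_in_semigroup S y : y \in S -> in_semigroup S y.
Proof.
elim: S => [|s S IH] //; rewrite inE => /predU1P [->|Sy].
  apply/in_semigroup_cons; exists 1, 0.
  by rewrite mul1n addn0; split; first exact: in_semigroup0.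
by apply/in_semigroup_cons; exists 0, y; split; first exact: IH.
Qed.

Lemma in_semigroup_trans S T :
  (forall y, y \in S -> in_semigroup T y) ->
  forall x, in_semigroup S x -> in_semigroup T x.
Proof.
elim: S => [|s S IH] ST x.
  by move=> /in_semigroup_nil ->; apply: in_semigroup0.
move=> /in_semigroup_cons [a [y [Sy ->]]]; apply: in_semigroupD.
  by apply/in_semigroupMl/ST; rewrite inE eqxx.
by apply: IH => // z Sz; apply: ST; rewrite inE Sz orbT.
Qed.

Lemma in_semigroup_subset S T :
  {subset S <= T} -> forall x, in_semigroup S x -> in_semigroup T x.
Proof. by move=> ST; apply: in_semigroup_trans => y /ST /mem_in_semigroup. Qed.

Definition gcd_seq (L : seq nat) : nat := \big[gcdn/0]_(x <- L) x.

Lemma gcd_seq_cons x L : gcd_seq (x :: L) = gcdn x (gcd_seq L).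
Proof. by rewrite /gcd_seq big_cons. Qed.

Lemma gcd_seq_cat X Y : gcd_seq (X ++ Y) = gcdn (gcd_seq X) (gcd_seq Y).
Proof. by rewrite /gcd_seq big_cat. Qed.

Lemma gcd_seq_cat_cons X z Y : gcd_seq (X ++ z :: Y) = gcdn z (gcd_seq (X ++ Y)).
Proof. by rewrite !gcd_seq_cat gcd_seq_cons gcdnCA. Qed.

Lemma dvdn_gcd_seq d L : (d %| gcd_seq L) = all (dvdn d) L.
Proof.
elim: L => [|x L IH]; first by rewrite /gcd_seq big_nil dvdn0.
by rewrite gcd_seq_cons dvdn_gcd IH.
Qed.

Lemma gcd_seq_dvdn x L : x \in L -> gcd_seq L %| x.
Proof.
by move=> xL; move: (dvdnn (gcd_seq L)); rewrite dvdn_gcd_seq => /allP; apply.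
Qed.

Lemma gcd_seq_dvdn_subset X Y : {subset X <= Y} -> gcd_seq Y %| gcd_seq X.
Proof.
by move=> XY; rewrite dvdn_gcd_seq; apply/allP => x /XY; apply: gcd_seq_dvdn.
Qed.

(* c_j = step_ratio d_{j-1} g_j, since d_j = gcd(d_{j-1}, g_j). *)
Definition step_ratio (d s : nat) : nat := d %/ gcdn d s.

Definition telescopic_at (P : seq nat) (s : nat) : Prop :=
  in_semigroup P (step_ratio (gcd_seq P) s * s).

Section PrefixSplit.
Variables (P R : seq nat) (s : nat).

Lemma Gpre_cat_cons : Gpre (P ++ s :: R) (size P) = P.
Proof. by rewrite /Gpre take_size_cat. Qed.

Lemma gi_cat_cons : gi (P ++ s :: R) (size P).+1 = s.
Proof. by rewrite /gi /= nth_cat ltnn subnn. Qed.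

Lemma cc_cat_cons : cc (P ++ s :: R) (size P).+1 = step_ratio (gcd_seq P) s.
Proof.
rewrite /cc /dgcd /Gpre /= take_size_cat // -/(gcd_seq P).
rewrite take_cat ltnNge leqnSn /= subSn // subnn /= take0 -/(gcd_seq _).
by rewrite gcd_seq_cat gcd_seq_cons /gcd_seq big_nil gcdn0.
Qed.

End PrefixSplit.

Lemma telescopicP S :
  telescopic S <->
  0 < head 0 S /\
  forall P s R, S = P ++ s :: R -> 0 < size P -> telescopic_at P s.
Proof.
split=> [[S1_gt0 [_ tel]]|[S1_gt0 tel]].
  split=> // P s R SE P_gt0.
  have := tel (size P).+1.
  rewrite SE Gpre_cat_cons gi_cat_cons cc_cat_cons; apply.
  by rewrite ltnS P_gt0 size_cat /= addnS ltnS leq_addr.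
have S_gt0 : 0 < size S by case: S S1_gt0 {tel}.
split=> //; split=> // j /andP [j_gt1 j_le].
have [k jE] : exists k, j = k.+1 by exists j.-1; lia.
have k_lt : k < size S by lia.
set P := take k S; set s := nth 0 S k; set R := drop j S.
have SE : S = P ++ s :: R by rewrite /R jE -(drop_nth 0 k_lt) cat_take_drop.
have size_P : size P = k by rewrite size_take k_lt.
rewrite jE /= SE -size_P Gpre_cat_cons gi_cat_cons cc_cat_cons.
by apply: (tel _ _ _ SE); lia.
Qed.

Lemma cat_cons_eq_cat {T : Type} {P R X Y : seq T} {s : T} :
  P ++ s :: R = X ++ Y ->
  (exists R', X = P ++ s :: R' /\ R = R' ++ Y) \/
  (exists P', P = X ++ P' /\ Y = P' ++ s :: R).
Proof.
elim: X P => [|x X IH] P /=; first by move=> <-; right; exists P.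
case: P => [|p P] /= [<-] E; first by left; exists X; rewrite E.
case: (IH P E) => [[R' [-> ->]]|[P' [-> ->]]]; first by left; exists R'.
by right; exists P'.
Qed.

Lemma gcdn_step_ratio_mul D e Q : 0 < D -> D %| Q ->
  gcdn Q (step_ratio D e * e) = step_ratio D e * gcdn Q e.
Proof.
move=> D_gt0 /dvdnP [q ->]; rewrite /step_ratio.
set g := gcdn D e; set c := D %/ g.
have g_gt0 : 0 < g by rewrite gcdn_gt0 D_gt0.
have DE : D = c * g by rewrite divnK ?dvdn_gcdl.
have [e' eE] : exists e', e = e' * g by exists (e %/ g); rewrite divnK ?dvdn_gcdr.
have coprime_e'c : coprime e' c.
  by rewrite /coprime -(eqn_pmul2r g_gt0) mul1n muln_gcdl -DE -eE gcdnC.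
rewrite DE eE !mulnA -!muln_gcdl (mulnC q c) -muln_gcdr.
by rewrite (gcdnC (c * q)) Gauss_gcdr // gcdnC mulnA.
Qed.

Section SwapDelete.
Variables (A B1 B2 : seq nat) (gn e : nat).
Let D := gcd_seq (A ++ gn :: B1).
Let c := step_ratio D e.
Hypothesis tel_G : telescopic (A ++ gn :: B1 ++ e :: B2).
Hypothesis A_gt0 : 0 < size A.
Hypothesis gnE : gn = c * e.

Let tel_G_split := proj2 (proj1 (telescopicP _) tel_G).

Lemma head_swapped_gt0 : 0 < head 0 (A ++ e :: B1 ++ B2).
Proof.
have [head_gt0 _] := proj1 (telescopicP _) tel_G.
by case: A A_gt0 head_gt0.
Qed.

Lemma gcd_seq_A_gt0 : 0 < gcd_seq A.
Proof.
apply: dvdn_gt0 head_swapped_gt0 _; apply: gcd_seq_dvdn.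
by case: A A_gt0 => // a A' _; rewrite inE eqxx.
Qed.

Lemma gcd_prefix_gt0 : 0 < D.
Proof. by rewrite /D gcd_seq_cat gcdn_gt0 gcd_seq_A_gt0. Qed.

Lemma step_ratio_gt0 : 0 < c.
Proof.
have D_gt0 := gcd_prefix_gt0.
by rewrite /c /step_ratio divn_gt0 ?gcdn_gt0 ?D_gt0 // dvdn_leq ?dvdn_gcdl.
Qed.

Lemma gcdn_gn Q : D %| Q -> gcdn Q gn = c * gcdn Q e.
Proof. by move=> DQ; rewrite gnE gcdn_step_ratio_mul // gcd_prefix_gt0. Qed.

Lemma in_semigroup_replace Y Z : {subset Y <= e :: Z} ->
  forall x, in_semigroup (A ++ gn :: Y) x -> in_semigroup (A ++ e :: Z) x.
Proof.
move=> YZ; apply: in_semigroup_trans => y.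
rewrite mem_cat inE => /or3P [yA|/eqP ->|/YZ yZ].
- by apply: mem_in_semigroup; rewrite mem_cat yA.
- rewrite gnE; apply/in_semigroupMl/mem_in_semigroup.
  by rewrite mem_cat inE eqxx orbT.
- by apply: mem_in_semigroup; rewrite mem_cat yZ orbT.
Qed.

Lemma telescopic_at_swapped_head : telescopic_at A e.
Proof.
have := tel_G_split A gn (B1 ++ e :: B2) erefl A_gt0.
have DA : D %| gcd_seq A by apply: gcd_seq_dvdn_subset => x xA; rewrite mem_cat xA.
rewrite /telescopic_at /step_ratio gcdn_gn //.
set h := gcdn (gcd_seq A) e.
have h_gt0 : 0 < h by rewrite gcdn_gt0 gcd_seq_A_gt0.
have /dvdnP [t ->] : c * h %| gcd_seq A by rewrite /h -gcdn_gn // dvdn_gcdl.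
by rewrite mulnK ?muln_gt0 ?step_ratio_gt0 // gnE mulnA (mulnA t) mulnK // mulnAC.
Qed.

Lemma telescopic_at_swapped_mid P0 s R :
  B1 = P0 ++ s :: R -> telescopic_at (A ++ e :: P0) s.
Proof.
move=> B1E.
have := tel_G_split (A ++ gn :: P0) s (R ++ e :: B2).
rewrite B1E -!catA /= => /(_ erefl); rewrite size_cat addn_gt0 A_gt0 => /(_ isT).
have Dy : D %| gcd_seq (A ++ P0).
  apply: gcd_seq_dvdn_subset => x; rewrite /D B1E !(mem_cat, inE).
  by case/orP=> ->; rewrite ?orbT.
have Ds : D %| s by apply: gcd_seq_dvdn; rewrite B1E !(mem_cat, inE) eqxx !orbT.
rewrite /telescopic_at /step_ratio !gcd_seq_cat_cons.
set y := gcd_seq (A ++ P0).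
rewrite !(gcdnC _ y) (gcdnAC y gn) (gcdnAC y e).
rewrite !gcdn_gn ?dvdn_gcd ?Dy ?Ds // divnMl ?step_ratio_gt0 //.
by apply: in_semigroup_replace => x x_in; rewrite inE x_in orbT.
Qed.

Lemma telescopic_at_swapped_tail Q s R :
  B2 = Q ++ s :: R -> telescopic_at (A ++ e :: B1 ++ Q) s.
Proof.
move=> B2E.
have := tel_G_split (A ++ gn :: B1 ++ e :: Q) s R.
rewrite B2E -!catA /= -!catA /= => /(_ erefl).
rewrite size_cat addn_gt0 A_gt0 => /(_ isT).
have e_dvd_gn : e %| gn by rewrite gnE dvdn_mull.
rewrite /telescopic_at !gcd_seq_cat_cons catA gcd_seq_cat_cons -catA.
rewrite gcdnA (gcdn_idPr e_dvd_gn).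
apply: in_semigroup_replace => x; rewrite !(mem_cat, inE).
by case/or3P=> [->|->|->]; rewrite ?orbT.
Qed.

Lemma telescopic_swapped : telescopic (A ++ e :: B1 ++ B2).
Proof.
apply/telescopicP; split=> [|P s R HE P_gt0]; first exact: head_swapped_gt0.
case: (cat_cons_eq_cat (esym HE)) => [[R' [AE _]]|[[|p P0] [-> /= [<- HE']]]].
- by apply: (tel_G_split _ _ (R' ++ gn :: B1 ++ e :: B2)); rewrite // AE -catA.
- by rewrite cats0; apply: telescopic_at_swapped_head.
case: (cat_cons_eq_cat (esym HE')) => [[R' [B1E _]]|[Q [-> B2E]]].
  exact: telescopic_at_swapped_mid B1E.
exact: telescopic_at_swapped_tail B2E.
Qed.

Lemma in_semigroup_swapped x :
  in_semigroup (A ++ e :: B1 ++ B2) x <-> in_semigroup (A ++ gn :: B1 ++ e :: B2) x.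
Proof.
split; last first.
  apply: in_semigroup_replace => y; rewrite !(mem_cat, inE).
  by case/or3P=> [->|->|->]; rewrite ?orbT.
apply: in_semigroup_subset => y; rewrite !(mem_cat, inE).
by case/or3P=> [->|/eqP->|/orP[]->]; rewrite ?eqxx ?orbT.
Qed.

End SwapDelete.

Lemma swap_del_split G n m : 0 < n -> n < m -> m <= size G ->
  exists A B1 B2,
  [/\ G = A ++ gi G n :: B1 ++ gi G m :: B2, size A = n.-1,
      size (A ++ gi G n :: B1) = m.-1 & swap_del G n m = A ++ gi G m :: B1 ++ B2].
Proof.
move=> n_gt0 lt_nm le_mG.
exists (take n.-1 G), (take (m.-1 - n) (drop n G)), (drop m G); split=> //.
- have n_lt : n.-1 < size G by lia.
  have m_lt : m.-1 < size G by lia.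
  rewrite /gi -{1}(cat_take_drop n.-1 G) (drop_nth 0 n_lt) prednK //.
  rewrite -{1}(cat_take_drop (m.-1 - n) (drop n G)) drop_drop subnK; last by lia.
  by rewrite (drop_nth 0 m_lt) prednK //; lia.
- by rewrite size_takel; lia.
- by rewrite size_cat /= !size_takel ?size_drop; lia.
Qed.

Theorem mainTheorem17 (G : seq nat) (n m : nat) :
  telescopic G ->
  1 < n -> n < m -> m <= size G ->
  gi G n = cc G m * gi G m ->
  telescopic (swap_del G n m) /\
  (forall x, in_semigroup (swap_del G n m) x <-> in_semigroup G x).
Proof.
move=> tel_G n_gt1 lt_nm le_mG.
have [A [B1 [B2 [GE size_A size_prefix ->]]]] :=
  swap_del_split G n m (ltnW n_gt1) lt_nm le_mG.
move: (gi G n) (gi G m) GE size_prefix => gn e GE size_prefix; subst G.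
have mE : m = (size (A ++ gn :: B1)).+1 by rewrite size_prefix; lia.
move=> gnE; rewrite mE -cat_cons catA cc_cat_cons in gnE.
have A_gt0 : 0 < size A by rewrite size_A; lia.
split; first exact: telescopic_swapped tel_G A_gt0 gnE.
by move=> x; apply: in_semigroup_swapped.
Qed.
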